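(* Let $0<\gamma<\delta<1$ and set $\beta=\sqrt{1-\delta^2}$. Then there exists a constant $C>0$, depending only on $\gamma$ and $\delta$, such that for every positive real number $m$, \[J_m(\gamma m)<C\left(\frac{\gamma}{\delta}\right)^{\beta m}J_m(\delta m).\]
   Context: $J_m$ denotes the Bessel function of the first kind of order $m$, i.e. the solution of $x^2J_m''(x)+xJ_m'(x)+(x^2-m^2)J_m(x)=0$ that is bounded at the origin, normalized by $\lim_{x\to0}x^{-m}J_m(x)=2^{-m}\Gamma(m+1)^{-1}$. *)

From Stdlib Require Import Reals Factorial.
From Coquelicot Require Import Coquelicot.
Open Scope R_scope.

Definition Gamma (s : R) : R :=
  RInt_gen (fun t => Rpower t (s - 1) * exp (- t)) (at_right 0) (Rbar_locally p_infty).

Definition besselJ (m x : R) : R :=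
  Series (fun k : nat =>
    (-1) ^ k / (INR (Factorial.fact k) * Gamma (m + INR k + 1)) * ((x / 2) ^ (2 * k) * Rpower (x / 2) m)).

(* Write J_m(x) = (x/2)^m P((x/2)^2), where P(z) = sum_k (-1)^k z^k / (k! Gamma(m+k+1))
   solves z P'' + (m+1) P' + P = 0.  For 0 < z < m^2/4 let r = sqrt(m^2 - 4z) and let
   rho = (r - m)/(2z) be the larger root of z rho^2 + m rho + 1 = 0.  Then H = 2 (P' - rho P)
   satisfies P' = H/2 + rho P and z H' = -((m+r)/2 + 1) H + 2P/r: each of P, H drives the
   other with a positive coefficient, so P and H, both positive at z = 0, stay positive on
   (0, m^2/4).  Consequently z^k P(z) with k = (1 - beta) m / 2 has derivative
   z^(k-1) (z H + (r - beta m) P) / 2 >= 0 as long as r >= beta m, i.e. for 4z <= delta^2 m^2.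
   Comparing z^k P(z) at z = (gamma m/2)^2 and z = (delta m/2)^2 gives
   J_m(gamma m) <= (gamma/delta)^(beta m) J_m(delta m), so any C > 1 works. *)

From Stdlib Require Import Reals Factorial.
From Coquelicot Require Import Coquelicot.
From Stdlib Require Import Lra Classical.
Open Scope R_scope.

(** * Real analysis *)

Lemma lub_approx (E : R -> Prop) : bound E -> (exists x, E x) ->
  exists l, (forall y, E y -> y <= l) /\
            (forall eps, 0 < eps -> exists y, E y /\ l - eps < y).
Proof.
  intros HE Hne. destruct (completeness E HE Hne) as [l [Hub Hlub]].
  exists l. split; [exact Hub|]. intros eps Heps.
  apply NNPP. intros Hno.
  enough (l <= l - eps) by lra.
  apply Hlub. intros y Hy. apply Rnot_lt_le. intros Hlt. apply Hno. now exists y.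
Qed.

Lemma RInt_subinterval_le (f : R -> R) (a b c d : R) :
  a <= c <= d -> d <= b -> ex_RInt f a b -> (forall x, a <= x <= b -> 0 <= f x) ->
  RInt f c d <= RInt f a b.
Proof.
  intros Hcd Hdb Hab Hf.
  assert (Had : ex_RInt f a d) by (apply (ex_RInt_Chasles_1 f a d b); [lra | exact Hab]).
  assert (Hdb' : ex_RInt f d b) by (apply (ex_RInt_Chasles_2 f a d b); [lra | exact Hab]).
  assert (Hac : ex_RInt f a c) by (apply (ex_RInt_Chasles_1 f a c d); [lra | exact Had]).
  assert (Hcd' : ex_RInt f c d) by (apply (ex_RInt_Chasles_2 f a c d); [lra | exact Had]).
  rewrite <- (RInt_Chasles f a d b Had Hdb'), <- (RInt_Chasles f a c d Hac Hcd').
  assert (0 <= RInt f a c) by (apply RInt_ge_0; [lra | exact Hac | intros; apply Hf; lra]).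
  assert (0 <= RInt f d b) by (apply RInt_ge_0; [lra | exact Hdb' | intros; apply Hf; lra]).
  unfold plus; simpl. lra.
Qed.

Lemma is_RInt_gen_p_infty_nonneg (f : R -> R) (a M : R) :
  (forall b, a <= b -> ex_RInt f a b) -> (forall x, a <= x -> 0 <= f x) ->
  (forall b, a <= b -> RInt f a b <= M) ->
  exists l, is_RInt_gen f (at_point a) (Rbar_locally p_infty) l /\
            (forall b, a <= b -> RInt f a b <= l).
Proof.
  intros Hex Hf HM.
  destruct (lub_approx (fun y => exists b, a <= b /\ y = RInt f a b)) as [l [Hub Happrox]].
  - exists M. intros y [b [Hb ->]]. now apply HM.
  - exists (RInt f a a), a. split; [lra | reflexivity].
  exists l. split; [| intros b Hb; apply Hub; now exists b].
  intros P [eps HP].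
  destruct (Happrox eps (cond_pos eps)) as [y0 [[b0 [Hb0 ->]] Hclose]].
  apply (Filter_prod _ _ _ (fun x => x = a) (fun y => b0 < y)); [reflexivity | now exists b0 |].
  intros x y -> Hy. exists (RInt f a y). split.
  - apply (RInt_correct (V := R_CompleteNormedModule)), Hex. lra.
  - apply HP.
    assert (RInt f a b0 <= RInt f a y)
      by (apply RInt_subinterval_le; [lra | lra | apply Hex; lra | intros; apply Hf; lra]).
    assert (RInt f a y <= l) by (apply Hub; exists y; split; [lra | reflexivity]).
    change (Rabs (RInt f a y - l) < eps). apply Rabs_def1; lra.
Qed.

Lemma is_RInt_gen_at_right_nonneg (f : R -> R) (a b M : R) : a < b ->
  (forall c, a < c <= b -> ex_RInt f c b) -> (forall x, a < x <= b -> 0 <= f x) ->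
  (forall c, a < c <= b -> RInt f c b <= M) ->
  exists l, is_RInt_gen f (at_right a) (at_point b) l /\
            (forall c, a < c <= b -> RInt f c b <= l).
Proof.
  intros Hab Hex Hf HM.
  destruct (lub_approx (fun y => exists c, a < c <= b /\ y = RInt f c b)) as [l [Hub Happrox]].
  - exists M. intros y [c [Hc ->]]. now apply HM.
  - exists (RInt f b b), b. split; [lra | reflexivity].
  exists l. split; [| intros c Hc; apply Hub; now exists c].
  intros P [eps HP].
  destruct (Happrox eps (cond_pos eps)) as [y0 [[c0 [Hc0 ->]] Hclose]].
  apply (Filter_prod _ _ _ (fun x => a < x < c0) (fun y => y = b)); [| reflexivity |].
  - assert (Hd : 0 < c0 - a) by lra.
    exists (mkposreal _ Hd). intros x Hx Hax.
    change (Rabs (x - a) < c0 - a) in Hx. apply Rabs_def2 in Hx. lra.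
  - intros x y Hx ->. exists (RInt f x b). split.
    + apply (RInt_correct (V := R_CompleteNormedModule)), Hex. lra.
    + apply HP.
      assert (RInt f c0 b <= RInt f x b)
        by (apply RInt_subinterval_le; [lra | lra | apply Hex; lra | intros; apply Hf; lra]).
      assert (RInt f x b <= l) by (apply Hub; exists x; split; [lra | reflexivity]).
      change (Rabs (RInt f x b - l) < eps). apply Rabs_def1; lra.
Qed.

Lemma RInt_inv_sqr (K b : R) : 1 <= b -> RInt (fun t => K / t ^ 2) 1 b = K - K / b.
Proof.
  intros Hb. apply is_RInt_unique.
  replace (K - K / b) with (minus ((fun t => - K / t) b) ((fun t => - K / t) 1))
    by (unfold minus, plus, opp; simpl; field; lra).
  apply (is_RInt_derive (V := R_CompleteNormedModule)); intros t Ht;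
    rewrite Rmin_left, Rmax_right in Ht by lra.
  - auto_derive; [lra | field; lra].
  - apply (ex_derive_continuous (V := R_NormedModule)). auto_derive. nra.
Qed.

Lemma continuous_pos_near (w : R -> R) (x : R) : continuous w x -> 0 < w x ->
  exists d, 0 < d /\ forall y, Rabs (y - x) < d -> 0 < w y.
Proof.
  intros Hc Hx. destruct (Hc _ (open_gt 0 _ Hx)) as [d Hd].
  exists d. split; [apply cond_pos | exact Hd].
Qed.

Lemma continuous_neg_near (w : R -> R) (x : R) : continuous w x -> w x < 0 ->
  exists d, 0 < d /\ forall y, Rabs (y - x) < d -> w y < 0.
Proof.
  intros Hc Hx. destruct (Hc _ (open_lt 0 _ Hx)) as [d Hd].
  exists d. split; [apply cond_pos | exact Hd].
Qed.

Lemma continuous_Rmin (f g : R -> R) (x : R) : continuous f x -> continuous g x ->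
  continuous (fun y => Rmin (f y) (g y)) x.
Proof.
  intros Hf Hg P [eps HP].
  destruct (Hf _ (locally_ball (f x) eps)) as [df Hdf].
  destruct (Hg _ (locally_ball (g x) eps)) as [dg Hdg].
  assert (Hd : 0 < Rmin df dg) by (apply Rmin_glb_lt; apply cond_pos).
  exists (mkposreal _ Hd). intros y Hy. apply HP.
  assert (Hfy := Hdf y (ball_le _ _ _ (Rmin_l df dg) _ Hy)).
  assert (Hgy := Hdg y (ball_le _ _ _ (Rmin_r df dg) _ Hy)).
  change (Rabs (f y - f x) < eps) in Hfy. change (Rabs (g y - g x) < eps) in Hgy.
  change (Rabs (Rmin (f y) (g y) - Rmin (f x) (g x)) < eps).
  apply Rabs_def2 in Hfy, Hgy. apply Rabs_def1;
    unfold Rmin; repeat destruct Rle_dec; lra.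
Qed.

Lemma continuous_induction (w : R -> R) (a b : R) : a <= b ->
  (forall x, a <= x <= b -> continuous w x) -> 0 < w a ->
  (forall t, a < t <= b -> (forall s, a <= s <= t -> 0 <= w s) -> 0 < w t) ->
  forall t, a <= t <= b -> 0 < w t.
Proof.
  intros Hab Hc Ha Hstep.
  set (S := fun t => a <= t <= b /\ forall s, a <= s <= t -> 0 < w s).
  assert (Sa : S a) by (split; [lra | intros s Hs; now replace s with a by lra]).
  destruct (completeness S) as [T [HTub HTlub]];
    [exists b; now intros t [Ht _] | now exists a |].
  assert (HaT : a <= T) by now apply HTub.
  assert (HTb : T <= b) by (apply HTlub; now intros t [Ht _]).
  assert (Hbelow : forall s, a <= s < T -> 0 < w s).
  { intros s Hs. apply Rnot_le_lt. intros Hws.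
    enough (T <= s) by lra.
    apply HTlub. intros t [Ht Hpos]. apply Rnot_lt_le. intros Hst.
    specialize (Hpos s ltac:(lra)). lra. }
  assert (HT : 0 < w T).
  { destruct (Req_dec T a) as [-> | HTa]; [exact Ha |].
    apply Hstep; [lra |]. intros s Hs.
    destruct (Req_dec s T) as [-> | HsT]; [| left; apply Hbelow; lra].
    apply Rnot_lt_le. intros Hneg.
    destruct (continuous_neg_near w T (Hc T ltac:(lra)) Hneg) as [d [Hd Hnear]].
    set (y := Rmax a (T - d / 2)).
    assert (Hy : a <= y < T) by (split; [apply Rmax_l | apply Rmax_lub_lt; lra]).
    assert (T - d / 2 <= y) by apply Rmax_r.
    assert (w y < 0) by (apply Hnear; rewrite Rabs_left; lra).
    specialize (Hbelow y Hy). lra. }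
  assert (HTeq : T = b).
  { destruct (Req_dec T b) as [| HTb']; [assumption | exfalso].
    destruct (continuous_pos_near w T (Hc T ltac:(lra)) HT) as [d [Hd Hnear]].
    set (t' := Rmin b (T + d / 2)).
    assert (T < t' <= b) by (split; [apply Rmin_glb_lt; lra | apply Rmin_l]).
    assert (t' <= T + d / 2) by apply Rmin_r.
    enough (Ht' : S t') by (specialize (HTub t' Ht'); lra).
    split; [lra |]. intros s Hs.
    destruct (Rlt_dec s T); [apply Hbelow; lra |].
    apply Hnear. rewrite Rabs_pos_eq; lra. }
  intros t Ht. destruct (Rlt_dec t T); [apply Hbelow; lra |].
  now replace t with T by lra.
Qed.

Lemma le_of_is_derive_nonneg (f df : R -> R) (a b : R) : a <= b ->
  (forall x, a <= x <= b -> is_derive f x (df x)) ->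
  (forall x, a <= x <= b -> 0 <= df x) -> f a <= f b.
Proof.
  intros Hab Hf Hdf.
  destruct (MVT_gen f a b df) as [c [Hc Hmvt]].
  - intros x Hx. rewrite Rmin_left, Rmax_right in Hx by lra. apply Hf. lra.
  - intros x Hx. rewrite Rmin_left, Rmax_right in Hx by lra.
    apply continuity_pt_filterlim, (ex_derive_continuous (V := R_NormedModule)).
    eexists. now apply Hf.
  - rewrite Rmin_left, Rmax_right in Hc by lra.
    assert (0 <= df c) by now apply Hdf.
    nra.
Qed.

Lemma exp_weighted_le (f df : R -> R) (L a b : R) : a <= b ->
  (forall x, a <= x <= b -> is_derive f x (df x)) ->
  (forall x, a <= x <= b -> 0 <= df x + L * f x) ->
  f a * exp (L * a) <= f b * exp (L * b).
Proof.
  intros Hab Hf Hdf.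
  apply (le_of_is_derive_nonneg (fun x => f x * exp (L * x))
           (fun x => (df x + L * f x) * exp (L * x))); [exact Hab | |].
  - intros x Hx.
    replace ((df x + L * f x) * exp (L * x))
      with (df x * exp (L * x) + f x * (L * exp (L * x))) by ring.
    apply (is_derive_mult f (fun x => exp (L * x))); [now apply Hf | | intros; apply Rmult_comm].
    auto_derive; [exact I | ring].
  - intros x Hx. apply Rmult_le_pos; [now apply Hdf | left; apply exp_pos].
Qed.

Lemma Rpower_le_1 (x a : R) : 0 < x <= 1 -> 0 <= a -> Rpower x a <= 1.
Proof.
  intros Hx Ha. replace 1 with (Rpower 1 a)
    by (unfold Rpower; rewrite ln_1, Rmult_0_r; apply exp_0).
  now apply Rle_Rpower_l.
Qed.

Lemma is_derive_Rpower_mul_exp (a t : R) : 0 < t ->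
  is_derive (fun u => Rpower u a * exp (- u)) t
    (a * Rpower t (a - 1) * exp (- t) - Rpower t a * exp (- t)).
Proof.
  intros Ht.
  replace (a * Rpower t (a - 1) * exp (- t) - Rpower t a * exp (- t))
    with (a * Rpower t (a - 1) * exp (- t) + Rpower t a * (- exp (- t))) by ring.
  apply (is_derive_mult (fun u => Rpower u a) (fun u => exp (- u))).
  - apply is_derive_Reals, derivable_pt_lim_power, Ht.
  - auto_derive; [exact I | ring].
  - intros; apply Rmult_comm.
Qed.

Lemma pow_mul_exp_le_fact (n : nat) (t : R) : 0 <= t -> t ^ n * exp (- t) <= INR (fact n).
Proof.
  intros Ht.
  assert (Hterm : t ^ n / INR (fact n) <= exp t).
  { apply Rle_trans with (sum_f_R0 (fun k => t ^ k / INR (fact k)) n);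
      [| now apply exp_ge_taylor].
    destruct n as [| n]; [simpl; lra |].
    rewrite tech5.
    enough (0 <= sum_f_R0 (fun k => t ^ k / INR (fact k)) n) by lra.
    apply cond_pos_sum. intros k.
    apply Rdiv_le_0_compat; [now apply pow_le | apply INR_fact_lt_0]. }
  assert (Hfact := INR_fact_lt_0 n).
  assert (Hexp : exp t * exp (- t) = 1) by (rewrite <- exp_plus, Rplus_opp_r; apply exp_0).
  assert (Hpow : t ^ n <= INR (fact n) * exp t).
  { replace (t ^ n) with (INR (fact n) * (t ^ n / INR (fact n))) by (field; lra).
    apply Rmult_le_compat_l; lra. }
  assert (0 < exp (- t)) by apply exp_pos.
  nra.
Qed.

Lemma Rpower_mul_exp_bounded (a : R) :
  exists K, 0 < K /\ forall t, 1 <= t -> Rpower t a * exp (- t) <= K.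
Proof.
  destruct (INR_unbounded a) as [n Hn].
  exists (INR (fact n)). split; [apply INR_fact_lt_0 |].
  intros t Ht. apply Rle_trans with (Rpower t (INR n) * exp (- t)).
  - apply Rmult_le_compat_r; [left; apply exp_pos |]. apply Rle_Rpower; lra.
  - rewrite Rpower_pow by lra. apply pow_mul_exp_le_fact. lra.
Qed.

Lemma Rpower_mul_exp_at_right_0 (a : R) : 1 <= a ->
  filterlim (fun t => Rpower t a * exp (- t)) (at_right 0) (locally 0).
Proof.
  intros Ha.
  apply (filterlim_le_le (fun _ => 0) _ (fun t => t) 0).
  - exists (mkposreal 1 Rlt_0_1). intros t Ht Htpos.
    change (Rabs (t - 0) < 1) in Ht. apply Rabs_def2 in Ht.
    assert (Rpower t a <= t).
    { replace a with (1 + (a - 1)) by ring. rewrite Rpower_plus, Rpower_1 by lra.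
      assert (Rpower t (a - 1) <= 1) by (apply Rpower_le_1; lra). nra. }
    assert (exp (- t) < 1) by (rewrite <- exp_0; apply exp_increasing; lra).
    assert (0 < Rpower t a) by apply exp_pos.
    assert (0 < exp (- t)) by apply exp_pos.
    split; nra.
  - apply filterlim_const.
  - intros P HP. change (locally 0 P) in HP. destruct HP as [eps HP].
    exists eps. intros t Ht _. now apply HP.
Qed.

Lemma Rpower_mul_exp_p_infty (a : R) :
  filterlim (fun t => Rpower t a * exp (- t)) (Rbar_locally p_infty) (locally 0).
Proof.
  destruct (Rpower_mul_exp_bounded (a + 1)) as [K [HK HKt]].
  apply (filterlim_le_le (fun _ => 0) _ (fun t => K * / t) 0).
  - exists 1. intros t Ht. specialize (HKt t (Rlt_le _ _ Ht)).
    rewrite Rpower_plus, Rpower_1 in HKt by lra.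
    assert (0 < Rpower t a) by apply exp_pos.
    assert (0 < exp (- t)) by apply exp_pos.
    split; [nra |].
    apply Rmult_le_reg_r with t; [lra |].
    replace (K * / t * t) with K by (field; lra). nra.
  - apply filterlim_const.
  - replace (Finite 0) with (Rbar_mult K (Rbar_inv p_infty)) by (simpl; f_equal; ring).
    apply (is_lim_scal_l (fun t => / t) K p_infty), is_lim_inv; [apply is_lim_id | discriminate].
Qed.

Lemma is_RInt_gen_at_right_p_infty_unique (f : R -> R) (l : R) :
  is_RInt_gen f (at_right 0) (Rbar_locally p_infty) l ->
  RInt_gen f (at_right 0) (Rbar_locally p_infty) = l.
Proof.
  apply (is_RInt_gen_unique (V := R_CompleteNormedModule)
           (FFa := Proper_StrongProper _ (at_right_proper_filter 0))
           (FFb := Proper_StrongProper _ (Rbar_locally_filter p_infty))).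
Qed.

Lemma is_RInt_gen_derive_vanishing (F dF : R -> R) :
  (forall t, 0 < t -> is_derive F t (dF t)) -> (forall t, 0 < t -> continuous dF t) ->
  filterlim F (at_right 0) (locally 0) -> filterlim F (Rbar_locally p_infty) (locally 0) ->
  is_RInt_gen dF (at_right 0) (Rbar_locally p_infty) 0.
Proof.
  intros HF HdF HF0 HFinf.
  assert (Hpositive : forall Q : R -> Prop, (forall x, 0 < x -> Q x) ->
    filter_prod (at_right 0) (Rbar_locally p_infty)
      (fun ab => forall x, Rmin (fst ab) (snd ab) <= x <= Rmax (fst ab) (snd ab) -> Q x)).
  { intros Q HQ.
    apply (Filter_prod _ _ _ (fun x => 0 < x) (fun y => 0 < y)).
    - exists (mkposreal 1 Rlt_0_1). now intros.
    - now exists 0.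
    - intros x y Hx Hy z Hz. apply HQ.
      assert (0 < Rmin x y) by now apply Rmin_glb_lt. simpl in Hz. lra. }
  apply (is_RInt_gen_ext (Derive F)).
  { eapply filter_imp; [| apply Hpositive with (Q := fun x => Derive F x = dF x)].
    - intros ab Hab x Hx. apply Hab. lra.
    - intros x Hx. now apply is_derive_unique, HF. }
  enough (H : is_RInt_gen (Derive F) (at_right 0) (Rbar_locally p_infty) (0 - 0))
    by now rewrite Rminus_0_r in H.
  apply is_RInt_gen_Derive; [| | exact HF0 | exact HFinf].
  - apply Hpositive. intros x Hx. eexists. now apply HF.
  - apply Hpositive. intros x Hx.
    apply (continuous_ext_loc _ dF); [| now apply HdF].
    exists (mkposreal x Hx). intros y Hy.
    change (Rabs (y - x) < x) in Hy. apply Rabs_def2 in Hy.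
    symmetry. apply is_derive_unique, HF. lra.
Qed.

(** * The Gamma function *)

Definition gamma_integrand (s t : R) : R := Rpower t (s - 1) * exp (- t).

Lemma continuous_gamma_integrand (s t : R) : 0 < t -> continuous (gamma_integrand s) t.
Proof.
  intros Ht. apply (ex_derive_continuous (V := R_NormedModule)).
  eexists. now apply is_derive_Rpower_mul_exp.
Qed.

(* [Rpower t a = exp (a * ln t)] is positive even for [t <= 0]. *)
Lemma gamma_integrand_pos (s t : R) : 0 < gamma_integrand s t.
Proof. apply Rmult_lt_0_compat; apply exp_pos. Qed.

Lemma gamma_integrand_le_1 (s t : R) : 1 <= s -> 0 < t <= 1 -> gamma_integrand s t <= 1.
Proof.
  intros Hs Ht. unfold gamma_integrand.
  assert (Rpower t (s - 1) <= 1) by (apply Rpower_le_1; lra).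
  assert (exp (- t) < 1) by (rewrite <- exp_0; apply exp_increasing; lra).
  assert (0 < Rpower t (s - 1)) by apply exp_pos.
  nra.
Qed.

Lemma ex_RInt_gamma_integrand (s a b : R) : 0 < a <= b -> ex_RInt (gamma_integrand s) a b.
Proof.
  intros Hab. apply (ex_RInt_continuous (V := R_CompleteNormedModule)).
  intros t Ht. rewrite Rmin_left, Rmax_right in Ht by lra.
  apply continuous_gamma_integrand. lra.
Qed.

Lemma gamma_integrand_le_inv_sqr (s : R) :
  exists K, 0 < K /\ forall t, 1 <= t -> gamma_integrand s t <= K / t ^ 2.
Proof.
  destruct (Rpower_mul_exp_bounded (s + 1)) as [K [HK HKt]].
  exists K. split; [exact HK |]. intros t Ht.
  specialize (HKt t Ht).
  replace (s + 1) with (s - 1 + INR 2) in HKt by (simpl; ring).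
  rewrite Rpower_plus, Rpower_pow in HKt by lra.
  unfold gamma_integrand. apply Rmult_le_reg_r with (t ^ 2); [nra |].
  replace (K / t ^ 2 * t ^ 2) with K by (field; lra).
  lra.
Qed.

Lemma is_RInt_gen_gamma_integrand (s : R) : 1 <= s ->
  exists G, is_RInt_gen (gamma_integrand s) (at_right 0) (Rbar_locally p_infty) G /\ 0 < G.
Proof.
  intros Hs.
  destruct (is_RInt_gen_at_right_nonneg (gamma_integrand s) 0 1 1) as [l1 [Hl1 Hl1_ge]].
  - lra.
  - intros c Hc. apply ex_RInt_gamma_integrand. lra.
  - intros x _. left. apply gamma_integrand_pos.
  - intros c Hc. apply Rle_trans with (RInt (fun _ => 1) c 1).
    + apply RInt_le; [lra | apply ex_RInt_gamma_integrand; lra | apply ex_RInt_const |].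
      intros t Ht. apply gamma_integrand_le_1; lra.
    + rewrite RInt_const. unfold scal; simpl; unfold mult; simpl. lra.
  - destruct (gamma_integrand_le_inv_sqr s) as [K [HK HKt]].
    destruct (is_RInt_gen_p_infty_nonneg (gamma_integrand s) 1 K) as [l2 [Hl2 Hl2_ge]].
    + intros b Hb. apply ex_RInt_gamma_integrand. lra.
    + intros x _. left. apply gamma_integrand_pos.
    + intros b Hb. apply Rle_trans with (RInt (fun t => K / t ^ 2) 1 b).
      * apply RInt_le; [lra | apply ex_RInt_gamma_integrand; lra | |].
        -- apply (ex_RInt_continuous (V := R_CompleteNormedModule)). intros t Ht.
           rewrite Rmin_left, Rmax_right in Ht by lra.
           apply (ex_derive_continuous (V := R_NormedModule)). auto_derive. nra.
        -- intros t Ht. apply HKt. lra.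
      * rewrite RInt_inv_sqr by lra.
        assert (0 < K / b) by (apply Rdiv_lt_0_compat; lra). lra.
    + exists (l1 + l2). split; [exact (is_RInt_gen_Chasles _ 1 l1 l2 Hl1 Hl2) |].
      assert (0 < RInt (gamma_integrand s) 1 2).
      { apply RInt_gt_0; [lra | intros; apply gamma_integrand_pos |].
        intros t Ht. apply continuous_gamma_integrand. lra. }
      assert (RInt (gamma_integrand s) 1 2 <= l2) by (apply Hl2_ge; lra).
      assert (RInt (gamma_integrand s) 1 1 <= l1) by (apply Hl1_ge; lra).
      rewrite RInt_point in *. unfold zero in *; simpl in *. lra.
Qed.

Lemma Gamma_eq (s G : R) :
  is_RInt_gen (gamma_integrand s) (at_right 0) (Rbar_locally p_infty) G -> Gamma s = G.
Proof. apply is_RInt_gen_at_right_p_infty_unique. Qed.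

Lemma Gamma_pos (s : R) : 1 <= s -> 0 < Gamma s.
Proof.
  intros Hs. destruct (is_RInt_gen_gamma_integrand s Hs) as [G [HG HGpos]].
  now rewrite (Gamma_eq s G HG).
Qed.

Lemma Gamma_succ (s : R) : 1 <= s -> Gamma (s + 1) = s * Gamma s.
Proof.
  intros Hs.
  destruct (is_RInt_gen_gamma_integrand s Hs) as [G1 [HG1 _]].
  destruct (is_RInt_gen_gamma_integrand (s + 1)) as [G2 [HG2 _]]; [lra |].
  rewrite (Gamma_eq _ _ HG1), (Gamma_eq _ _ HG2).
  set (dF := fun t => s * gamma_integrand s t - gamma_integrand (s + 1) t).
  assert (HdF0 : is_RInt_gen dF (at_right 0) (Rbar_locally p_infty) 0).
  { apply (is_RInt_gen_derive_vanishing (fun t => Rpower t s * exp (- t))).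
    - intros t Ht. unfold dF, gamma_integrand. replace (s + 1 - 1) with s by ring.
      replace (s * (Rpower t (s - 1) * exp (- t)) - Rpower t s * exp (- t))
        with (s * Rpower t (s - 1) * exp (- t) - Rpower t s * exp (- t)) by ring.
      now apply is_derive_Rpower_mul_exp.
    - intros t Ht. apply (ex_derive_continuous (V := R_NormedModule)).
      apply (ex_derive_minus (fun t => s * gamma_integrand s t));
        [apply (ex_derive_scal (gamma_integrand s)) |];
        eexists; now apply is_derive_Rpower_mul_exp.
    - now apply Rpower_mul_exp_at_right_0.
    - apply Rpower_mul_exp_p_infty. }
  assert (HdF := is_RInt_gen_minus _ _ _ _ (is_RInt_gen_scal _ s _ HG1) HG2).
  apply is_RInt_gen_at_right_p_infty_unique in HdF0, HdF.
  change (RInt_gen dF (at_right 0) (Rbar_locally p_infty) = s * G1 - G2) in HdF.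
  lra.
Qed.

(** * The power series of J_m *)

Definition bessel_coef (m : R) (k : nat) : R :=
  (-1) ^ k / (INR (fact k) * Gamma (m + INR k + 1)).

Definition bessel_P (m z : R) : R := PSeries (bessel_coef m) z.
Definition bessel_dP (m z : R) : R := PSeries (PS_derive (bessel_coef m)) z.
Definition bessel_d2P (m z : R) : R := PSeries (PS_derive (PS_derive (bessel_coef m))) z.

Lemma besselJ_eq (m x : R) : besselJ m x = Rpower (x / 2) m * bessel_P m ((x / 2) ^ 2).
Proof.
  unfold besselJ, bessel_P, PSeries.
  rewrite Rmult_comm, <- Series_scal_r. apply Series_ext. intros k.
  unfold bessel_coef. rewrite pow_mult. ring.
Qed.

Section BesselSeries.

Variable m : R.
Hypothesis m_pos : 0 < m.

Lemma Gamma_shift_pos (k : nat) : 0 < Gamma (m + INR k + 1).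
Proof. apply Gamma_pos. assert (0 <= INR k) by apply pos_INR. lra. Qed.

Lemma bessel_coef_neq0 (k : nat) : bessel_coef m k <> 0.
Proof.
  unfold bessel_coef. assert (H := Gamma_shift_pos k). assert (Hf := INR_fact_lt_0 k).
  apply Rmult_integral_contrapositive_currified.
  - apply pow_nonzero. lra.
  - apply Rinv_neq_0_compat. nra.
Qed.

Lemma bessel_coef0_pos : 0 < bessel_coef m 0.
Proof.
  unfold bessel_coef. assert (H := Gamma_shift_pos 0). simpl in *.
  apply Rdiv_lt_0_compat; lra.
Qed.

Lemma bessel_coef_succ (k : nat) :
  bessel_coef m (S k) = - bessel_coef m k / ((INR k + 1) * (m + INR k + 1)).
Proof.
  unfold bessel_coef.
  rewrite S_INR. replace (m + (INR k + 1) + 1) with (m + INR k + 1 + 1) by ring.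
  assert (Hk : 0 <= INR k) by apply pos_INR.
  rewrite Gamma_succ by lra.
  assert (H := Gamma_shift_pos k). assert (Hf := INR_fact_lt_0 k).
  change (fact (S k)) with (S k * fact k)%nat. rewrite mult_INR, S_INR.
  simpl. field. repeat split; lra.
Qed.

Lemma CV_radius_bessel_coef : CV_radius (bessel_coef m) = p_infty.
Proof.
  apply CV_radius_infinite_DAlembert; [exact bessel_coef_neq0 |].
  apply (is_lim_seq_le_le (fun _ => 0) _ (fun n => / INR (S n))).
  - intros n. rewrite bessel_coef_succ.
    assert (Hn : 0 <= INR n) by apply pos_INR.
    assert (Hc := bessel_coef_neq0 n).
    replace (- bessel_coef m n / ((INR n + 1) * (m + INR n + 1)) / bessel_coef m n)
      with (- / ((INR n + 1) * (m + INR n + 1))) by (field; repeat split; lra).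
    rewrite Rabs_Ropp, Rabs_pos_eq by (left; apply Rinv_0_lt_compat; nra).
    split; [left; apply Rinv_0_lt_compat; nra |].
    rewrite S_INR. apply Rinv_le_contravar; nra.
  - apply is_lim_seq_const.
  - replace (Finite 0) with (Rbar_inv p_infty) by reflexivity.
    apply is_lim_seq_inv; [| discriminate].
    apply (is_lim_seq_incr_1 INR p_infty), is_lim_seq_INR.
Qed.

Lemma is_derive_bessel_P (z : R) : is_derive (bessel_P m) z (bessel_dP m z).
Proof. apply is_derive_PSeries. now rewrite CV_radius_bessel_coef. Qed.

Lemma is_derive_bessel_dP (z : R) : is_derive (bessel_dP m) z (bessel_d2P m z).
Proof. apply is_derive_PSeries. now rewrite CV_radius_derive, CV_radius_bessel_coef. Qed.

Lemma continuous_bessel_P (z : R) : continuous (bessel_P m) z.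
Proof.
  apply (ex_derive_continuous (V := R_NormedModule)).
  eexists. apply is_derive_bessel_P.
Qed.

Lemma bessel_P_ode (z : R) :
  z * bessel_d2P m z + (m + 1) * bessel_dP m z + bessel_P m z = 0.
Proof.
  set (a := bessel_coef m). set (da := PS_derive a). set (d2a := PS_derive da).
  assert (Ha : is_pseries a z (bessel_P m z)).
  { apply PSeries_correct, CV_radius_inside. unfold a. now rewrite CV_radius_bessel_coef. }
  assert (Hda : is_pseries da z (bessel_dP m z)).
  { apply PSeries_correct, CV_radius_inside.
    unfold da, a. now rewrite CV_radius_derive, CV_radius_bessel_coef. }
  assert (Hd2a : is_pseries d2a z (bessel_d2P m z)).
  { apply PSeries_correct, CV_radius_inside.
    unfold d2a, da, a. now rewrite !CV_radius_derive, CV_radius_bessel_coef. }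
  assert (Hsum := is_pseries_plus _ _ _ _ _
    (is_pseries_plus _ _ _ _ _ (is_pseries_incr_1 _ _ _ Hd2a)
       (is_pseries_scal (m + 1) _ _ _ (Rmult_comm _ _) Hda)) Ha).
  assert (H0 : is_pseries (fun _ => 0) z
                 (z * bessel_d2P m z + (m + 1) * bessel_dP m z + bessel_P m z)).
  { eapply is_pseries_ext; [| exact Hsum].
    intros n. unfold PS_plus, PS_scal, PS_incr_1, d2a, da, PS_derive, a.
    destruct n as [| k].
    - rewrite bessel_coef_succ. unfold plus, scal, zero; simpl; unfold mult; simpl.
      field. lra.
    - rewrite (bessel_coef_succ (S k)), !S_INR. unfold plus, scal; simpl; unfold mult; simpl.
      assert (0 <= INR k) by apply pos_INR.
      field. split; lra. }
  apply is_pseries_unique in H0. now rewrite PSeries_const_0 in H0.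
Qed.

End BesselSeries.

(** * Positivity of P and H *)

Definition rdisc (m z : R) : R := sqrt (m * m - 4 * z).

(* [barrier m z = - 2 rho], with [rho = (rdisc m z - m) / (2 z)] the larger root of
   [z rho^2 + m rho + 1 = 0]; this form is also defined at [z = 0]. *)
Definition barrier (m z : R) : R := 4 / (m + rdisc m z).
Definition dbarrier (m z : R) : R := 8 / (rdisc m z * (m + rdisc m z) ^ 2).

Definition bessel_H (m z : R) : R := 2 * bessel_dP m z + barrier m z * bessel_P m z.

Definition bessel_dH (m z : R) : R :=
  2 * bessel_d2P m z + dbarrier m z * bessel_P m z + barrier m z * bessel_dP m z.

Section Positivity.

Variable m : R.
Hypothesis m_pos : 0 < m.

Lemma rdisc_pos (z : R) : 4 * z < m * m -> 0 < rdisc m z.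
Proof. intros Hz. apply sqrt_lt_R0. lra. Qed.

Lemma rdisc_sqr (z : R) : 4 * z < m * m -> rdisc m z * rdisc m z = m * m - 4 * z.
Proof. intros Hz. apply sqrt_sqrt. lra. Qed.

Lemma rdisc_le (z : R) : 0 <= z -> 4 * z < m * m -> rdisc m z <= m.
Proof. intros Hz0 Hz. assert (H := rdisc_sqr z Hz). assert (H0 := rdisc_pos z Hz). nra. Qed.

Lemma barrier_bounds (z : R) : 4 * z < m * m -> 0 < barrier m z <= 4 / m.
Proof.
  intros Hz. assert (Hr := rdisc_pos z Hz). unfold barrier. split.
  - apply Rdiv_lt_0_compat; lra.
  - apply Rmult_le_compat_l; [lra |]. apply Rinv_le_contravar; lra.
Qed.

Lemma is_derive_barrier (z : R) : 4 * z < m * m -> is_derive (barrier m) z (dbarrier m z).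
Proof.
  intros Hz. assert (H1 := rdisc_sqr z Hz). assert (H2 := rdisc_pos z Hz).
  unfold barrier, dbarrier, rdisc, Rminus in *. auto_derive.
  - repeat split; [lra | intros Hc; nra].
  - field. split; nra.
Qed.

Lemma is_derive_bessel_H (z : R) : 4 * z < m * m -> is_derive (bessel_H m) z (bessel_dH m z).
Proof.
  intros Hz. unfold bessel_H, bessel_dH.
  replace (2 * bessel_d2P m z + dbarrier m z * bessel_P m z + barrier m z * bessel_dP m z)
    with (2 * bessel_d2P m z + (dbarrier m z * bessel_P m z + barrier m z * bessel_dP m z))
    by ring.
  apply (is_derive_plus (fun z => 2 * bessel_dP m z) (fun z => barrier m z * bessel_P m z)).
  - apply (is_derive_scal (bessel_dP m)), is_derive_bessel_dP, m_pos.
  - apply (is_derive_mult (barrier m) (bessel_P m));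
      [now apply is_derive_barrier | now apply is_derive_bessel_P | intros; apply Rmult_comm].
Qed.

Lemma continuous_bessel_H (z : R) : 4 * z < m * m -> continuous (bessel_H m) z.
Proof.
  intros Hz. apply (ex_derive_continuous (V := R_NormedModule)).
  eexists. now apply is_derive_bessel_H.
Qed.

Lemma bessel_H_ode (z : R) : 4 * z < m * m ->
  z * bessel_dH m z = - ((m + rdisc m z) / 2 + 1) * bessel_H m z + 2 * bessel_P m z / rdisc m z.
Proof.
  intros Hz. assert (H1 := rdisc_sqr z Hz). assert (H2 := rdisc_pos z Hz).
  assert (Hode := bessel_P_ode m m_pos z).
  unfold bessel_dH, bessel_H, dbarrier, barrier.
  set (r := rdisc m z) in *.
  replace (z * (2 * bessel_d2P m z + 8 / (r * (m + r) ^ 2) * bessel_P m z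
                + 4 / (m + r) * bessel_dP m z))
    with (2 * (z * bessel_d2P m z)
          + z * (8 / (r * (m + r) ^ 2) * bessel_P m z + 4 / (m + r) * bessel_dP m z)) by ring.
  replace (z * bessel_d2P m z) with (- (m + 1) * bessel_dP m z - bessel_P m z) by lra.
  replace z with ((m * m - r * r) / 4) by lra.
  field. split; lra.
Qed.

Lemma bessel_H0_pos : 0 < bessel_H m 0.
Proof.
  assert (Hc := bessel_coef0_pos m m_pos).
  unfold bessel_H, barrier, rdisc, bessel_P, bessel_dP.
  rewrite !PSeries_0. unfold PS_derive. rewrite bessel_coef_succ by exact m_pos.
  replace (m * m - 4 * 0) with (m * m) by ring. rewrite sqrt_square by lra.
  simpl.
  replace (2 * (1 * (- bessel_coef m 0 / ((0 + 1) * (m + 0 + 1)))) + 4 / (m + m) * bessel_coef m 0)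
    with (2 * bessel_coef m 0 / (m * (m + 1))) by (field; lra).
  apply Rdiv_lt_0_compat; nra.
Qed.

Lemma bessel_P_weighted_derive_nonneg (L z : R) : 4 * z < m * m -> 2 / m <= L ->
  0 <= bessel_P m z -> 0 <= bessel_H m z -> 0 <= bessel_dP m z + L * bessel_P m z.
Proof.
  intros Hz HL HP HH. destruct (barrier_bounds z Hz) as [Hq0 Hq].
  assert (Hq2 : barrier m z / 2 <= L)
    by (replace (2 / m) with (4 / m / 2) in HL by (field; lra); lra).
  replace (bessel_dP m z + L * bessel_P m z)
    with (bessel_H m z / 2 + (L - barrier m z / 2) * bessel_P m z) by (unfold bessel_H; field).
  nra.
Qed.

Lemma bessel_H_weighted_derive_nonneg (L z : R) :
  0 < z -> 4 * z < m * m -> m + 1 <= z * L ->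
  0 <= bessel_P m z -> 0 <= bessel_H m z -> 0 <= bessel_dH m z + L * bessel_H m z.
Proof.
  intros Hz0 Hz HL HP HH.
  assert (Hr := rdisc_pos z Hz). assert (Hrm := rdisc_le z (Rlt_le _ _ Hz0) Hz).
  apply Rmult_le_reg_l with z; [exact Hz0 |].
  rewrite Rmult_0_r, Rmult_plus_distr_l, bessel_H_ode by exact Hz.
  assert (0 <= (z * L - ((m + rdisc m z) / 2 + 1)) * bessel_H m z) by (apply Rmult_le_pos; lra).
  assert (0 <= 2 * bessel_P m z / rdisc m z) by (apply Rdiv_le_0_compat; lra).
  nra.
Qed.

Lemma bessel_P_H_pos_propagate (z0 t : R) : 0 < z0 <= t -> 4 * t < m * m ->
  0 < bessel_P m z0 -> 0 < bessel_H m z0 ->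
  (forall s, z0 <= s <= t -> 0 <= bessel_P m s /\ 0 <= bessel_H m s) ->
  0 < bessel_P m t /\ 0 < bessel_H m t.
Proof.
  intros Hz0 Ht HPz0 HHz0 Hnonneg.
  set (L := 2 / m + (m + 1) / z0).
  assert (0 < (m + 1) / z0) by (apply Rdiv_lt_0_compat; lra).
  assert (HL1 : 2 / m <= L) by (unfold L; lra).
  assert (HL2 : forall x, z0 <= x -> m + 1 <= x * L).
  { intros x Hx. assert (0 < 2 / m) by (apply Rdiv_lt_0_compat; lra).
    assert (z0 * ((m + 1) / z0) = m + 1) by (field; lra).
    unfold L. nra. }
  assert (HP : bessel_P m z0 * exp (L * z0) <= bessel_P m t * exp (L * t)).
  { apply (exp_weighted_le _ (bessel_dP m));
      [lra | intros; apply is_derive_bessel_P; exact m_pos |].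
    intros x Hx. destruct (Hnonneg x Hx).
    apply bessel_P_weighted_derive_nonneg; [lra | exact HL1 | assumption | assumption]. }
  assert (HH : bessel_H m z0 * exp (L * z0) <= bessel_H m t * exp (L * t)).
  { apply (exp_weighted_le _ (bessel_dH m)); [lra | intros; apply is_derive_bessel_H; lra |].
    intros x Hx. destruct (Hnonneg x Hx).
    apply bessel_H_weighted_derive_nonneg; [lra | lra | apply HL2; lra | assumption | assumption]. }
  assert (0 < exp (L * z0)) by apply exp_pos. assert (0 < exp (L * t)) by apply exp_pos.
  split; nra.
Qed.

Lemma bessel_P_H_pos (z : R) : 0 < z -> 4 * z < m * m -> 0 < bessel_P m z /\ 0 < bessel_H m z.
Proof.
  intros Hz Hzm.
  set (w := fun y => Rmin (bessel_P m y) (bessel_H m y)).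
  assert (Hw_pos : forall y, 0 < w y -> 0 < bessel_P m y /\ 0 < bessel_H m y)
    by (intros y Hy; split; eapply Rlt_le_trans;
        [exact Hy | apply Rmin_l | exact Hy | apply Rmin_r]).
  assert (Hw_nonneg : forall y, 0 <= w y -> 0 <= bessel_P m y /\ 0 <= bessel_H m y)
    by (intros y Hy; split; eapply Rle_trans;
        [exact Hy | apply Rmin_l | exact Hy | apply Rmin_r]).
  assert (Hw_cont : forall y, 4 * y < m * m -> continuous w y)
    by (intros y Hy; apply continuous_Rmin;
        [apply continuous_bessel_P | apply continuous_bessel_H]; assumption).
  assert (Hw0 : 0 < w 0).
  { apply Rmin_glb_lt; [| exact bessel_H0_pos].
    unfold bessel_P. rewrite PSeries_0. now apply bessel_coef0_pos. }
  (* The equation for H is singular at z = 0, so the continuity argument starts at z0 > 0. *)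
  destruct (continuous_pos_near w 0 (Hw_cont 0 ltac:(nra)) Hw0) as [d [Hd Hnear]].
  set (z0 := Rmin z (d / 2)).
  assert (Hz0 : 0 < z0 <= z) by (split; [apply Rmin_glb_lt | apply Rmin_l]; lra).
  assert (Hwz0 : 0 < w z0).
  { apply Hnear. assert (z0 <= d / 2) by apply Rmin_r. rewrite Rminus_0_r, Rabs_pos_eq; lra. }
  destruct (Hw_pos z0 Hwz0) as [HPz0 HHz0].
  apply Hw_pos, (continuous_induction w z0 z);
    [lra | intros; apply Hw_cont; lra | exact Hwz0 | | lra].
  intros t Ht Hnonneg.
  enough (0 < bessel_P m t /\ 0 < bessel_H m t) by (apply Rmin_glb_lt; tauto).
  apply (bessel_P_H_pos_propagate z0 t); [lra | lra | exact HPz0 | exact HHz0 |].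
  intros s Hs. now apply Hw_nonneg, Hnonneg.
Qed.

End Positivity.

(** * Comparison of J_m at two points *)

Lemma bessel_P_power_le (m beta z1 z2 : R) : 0 < m -> 0 < beta -> 0 < z1 <= z2 ->
  4 * z2 <= (1 - beta ^ 2) * (m * m) ->
  Rpower z1 ((1 - beta) * m / 2) * bessel_P m z1
  <= Rpower z2 ((1 - beta) * m / 2) * bessel_P m z2.
Proof.
  intros Hm Hb Hz Hz2.
  set (k := (1 - beta) * m / 2).
  apply (le_of_is_derive_nonneg (fun z => Rpower z k * bessel_P m z)
           (fun z => k * Rpower z (k - 1) * bessel_P m z + Rpower z k * bessel_dP m z));
    [lra | |].
  - intros z Hzz. apply (is_derive_mult (fun z => Rpower z k) (bessel_P m));
      [| now apply is_derive_bessel_P | intros; apply Rmult_comm].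
    apply is_derive_Reals, derivable_pt_lim_power. lra.
  - intros z Hzz.
    assert (0 < beta ^ 2 * (m * m)) by (apply Rmult_lt_0_compat; nra).
    assert (Hzm : 4 * z < m * m) by lra.
    destruct (bessel_P_H_pos m Hm z ltac:(lra) Hzm) as [HP HH].
    assert (Hr := rdisc_pos m z Hzm). assert (Hr2 := rdisc_sqr m z Hzm).
    assert (Hrb : beta * m <= rdisc m z) by nra.
    assert (Hpow : Rpower z k = Rpower z (k - 1) * z).
    { rewrite <- (Rpower_1 z) at 3 by lra. rewrite <- Rpower_plus. f_equal. ring. }
    assert (Hkey : 2 * (k * bessel_P m z + z * bessel_dP m z)
                   = z * bessel_H m z + (rdisc m z - beta * m) * bessel_P m z).
    { unfold bessel_H, barrier, k.
      set (r := rdisc m z) in *. set (P := bessel_P m z). set (dP := bessel_dP m z).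
      replace z with ((m * m - r * r) / 4) by lra.
      field. lra. }
    assert (0 <= k * bessel_P m z + z * bessel_dP m z).
    { assert (0 <= (rdisc m z - beta * m) * bessel_P m z) by (apply Rmult_le_pos; lra).
      nra. }
    rewrite Hpow.
    assert (0 < Rpower z (k - 1)) by apply exp_pos.
    nra.
Qed.

Lemma besselJ_pos (m x : R) : 0 < m -> 0 < x < m -> 0 < besselJ m x.
Proof.
  intros Hm Hx. rewrite besselJ_eq.
  apply Rmult_lt_0_compat; [apply exp_pos |].
  apply (bessel_P_H_pos m Hm); nra.
Qed.

Lemma besselJ_le (m beta x y : R) : 0 < m -> 0 < beta -> 0 < x <= y ->
  y ^ 2 <= (1 - beta ^ 2) * m ^ 2 ->
  besselJ m x <= Rpower (x / y) (beta * m) * besselJ m y.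
Proof.
  intros Hm Hb Hxy Hy.
  set (k := (1 - beta) * m / 2).
  assert (Hmono := bessel_P_power_le m beta ((x / 2) ^ 2) ((y / 2) ^ 2) Hm Hb
                     ltac:(split; nra) ltac:(nra)).
  fold k in Hmono.
  assert (Hsqr : forall a, 0 < a -> Rpower (a ^ 2) k = Rpower a (2 * k)).
  { intros a Ha. rewrite <- (Rpower_pow 2 a), Rpower_mult by lra. now f_equal. }
  rewrite !Hsqr in Hmono by lra.
  assert (Hsplit : forall a, 0 < a -> Rpower a m = Rpower a (beta * m) * Rpower a (2 * k)).
  { intros a Ha. rewrite <- Rpower_plus. f_equal. unfold k. field. }
  assert (Hratio : Rpower (x / y) (beta * m) * Rpower (y / 2) (beta * m)
                   = Rpower (x / 2) (beta * m)).
  { rewrite Rpower_mult_distr by (apply Rdiv_lt_0_compat; lra). f_equal. field. lra. }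
  rewrite !besselJ_eq, !Hsplit by lra.
  replace (Rpower (x / y) (beta * m) * (Rpower (y / 2) (beta * m) * Rpower (y / 2) (2 * k)
             * bessel_P m ((y / 2) ^ 2)))
    with (Rpower (x / 2) (beta * m) * (Rpower (y / 2) (2 * k) * bessel_P m ((y / 2) ^ 2)))
    by (rewrite <- Hratio; ring).
  rewrite Rmult_assoc. apply Rmult_le_compat_l; [left; apply exp_pos | exact Hmono].
Qed.

Theorem mainTheorem1 (gamma delta : R) :
  0 < gamma -> gamma < delta -> delta < 1 ->
  exists C : R, 0 < C /\
    forall m : R, 0 < m ->
      besselJ m (gamma * m) <
      C * Rpower (gamma / delta) (sqrt (1 - delta ^ 2) * m) * besselJ m (delta * m).
Proof.
  intros Hg Hgd Hd. exists 2. split; [lra |]. intros m Hm.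
  set (beta := sqrt (1 - delta ^ 2)).
  assert (Hbeta : 0 < beta) by (apply sqrt_lt_R0; nra).
  assert (Hbeta2 : beta ^ 2 = 1 - delta ^ 2)
    by (unfold beta; rewrite <- Rsqr_pow2; apply Rsqr_sqrt; nra).
  assert (Hle := besselJ_le m beta (gamma * m) (delta * m) Hm Hbeta
                   ltac:(split; nra) ltac:(nra)).
  replace (gamma * m / (delta * m)) with (gamma / delta) in Hle by (field; lra).
  assert (0 < besselJ m (delta * m)) by (apply besselJ_pos; nra).
  assert (0 < Rpower (gamma / delta) (beta * m)) by apply exp_pos.
  nra.
Qed.
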